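(* Consider $2$ agents with additive, identical, normalized valuation $v$, and no predictions. Consider the online algorithm that allocates each arriving good $g_t$ to agent 1 if $v(A_1)+v(g_t)\le \varphi-1$, where $A_1$ is agent 1's current bundle and $\varphi=\frac{1+\sqrt5}{2}$, and otherwise allocates $g_t$ to agent 2. This algorithm guarantees that the final allocation is $(\varphi-1)$-EFX.
   Context: Online fair division model: goods $g_1,\dots,g_T$ arrive one per time step; the agents have an identical additive normalized valuation $v$ ($v(g_t)\ge0$, $\sum_{t=1}^T v(g_t)=1$, $v(S)=\sum_{g\in S}v(g)$). When $g_t$ arrives, $v(g_t)$ is revealed and $g_t$ must be irrevocably allocated to one agent. For a bundle $S\ne\emptyset$, let $\bar S=S\setminus\{g\}$ with $g\in\arg\max_{g'\in S}v(S\setminus\{g'\})$, and $\bar\emptyset=\emptyset$. For $a\in[0,1]$, an allocation $(A_1,A_2)$ is $a$-EFX if $v(A_i)\ge a\cdot v(\bar A_j)$ for all $i,j$. *)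

From Stdlib Require Import Reals List Arith.
Import ListNotations.
Open Scope R_scope.

(* Goods are indexed 0..T-1; v t is the value of good g_t.
   Agents are booleans: true = agent 1, false = agent 2. *)

Definition phi : R := (1 + sqrt 5) / 2.

Definition val (v : nat -> R) (S : list nat) : R :=
  fold_right Rplus 0 (map v S).

Definition remove_good (S : list nat) (g : nat) : list nat :=
  filter (fun t => negb (Nat.eqb t g)) S.

(* v(bar S) = max_{g in S} v(S \ {g}) for S nonempty, 0 for S empty *)
Definition val_bar (v : nat -> R) (S : list nat) : R :=
  match S with
  | [] => 0
  | g :: rest =>
      fold_right Rmax (val v (remove_good S g))
                 (map (fun g' => val v (remove_good S g')) rest)
  end.

Definition bundle (T : nat) (alloc : nat -> bool) (i : bool) : list nat :=
  filter (fun t => Bool.eqb (alloc t) i) (seq 0 T).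

Definition is_aEFX (a : R) (v : nat -> R) (T : nat) (alloc : nat -> bool) : Prop :=
  forall i j : bool,
    val v (bundle T alloc i) >= a * val_bar v (bundle T alloc j).

(* The algorithm: load1 n = v(A_1) after goods g_0..g_{n-1} have been allocated. *)
Fixpoint load1 (v : nat -> R) (n : nat) : R :=
  match n with
  | O => 0
  | S m => if Rle_dec (load1 v m + v m) (phi - 1)
           then load1 v m + v m else load1 v m
  end.

Definition alg (v : nat -> R) (t : nat) : bool :=
  if Rle_dec (load1 v t + v t) (phi - 1) then true else false.

From Stdlib Require Import Reals List Lra Lia Psatz.
Import ListNotations.
Open Scope R_scope.

(* Write c = phi - 1, so that c^2 = 1 - c.  Agent 1 ends with value x <= c and
   agent 2 with 1 - x >= c^2 >= c x, which settles agent 2's envy.  A good goes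
   to agent 2 only if it would lift agent 1 above c, and agent 1's load only
   grows, so every good of agent 2 is worth more than c - x.  If agent 2 holds
   two goods or more, removing one of them leaves a value r with
   c - x < r < 1 - c; hence x > 2c - 1 = c (1 - c) > c r. *)

Lemma val_cons v a l : val v (a :: l) = v a + val v l.
Proof. reflexivity. Qed.

Lemma val_app v l1 l2 : val v (l1 ++ l2) = val v l1 + val v l2.
Proof.
  induction l1 as [|a l1 IH]; simpl app.
  - unfold val at 2; simpl; ring.
  - rewrite !val_cons, IH; ring.
Qed.

Lemma val_nonneg v S : (forall y, In y S -> 0 <= v y) -> 0 <= val v S.
Proof.
  induction S as [|a S IH]; intro Hnn; [unfold val; simpl; lra|].
  rewrite val_cons.
  assert (0 <= v a) by (apply Hnn; left; reflexivity).
  assert (0 <= val v S) by (apply IH; intros y Hy; apply Hnn; right; exact Hy).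
  lra.
Qed.

Lemma val_ge_elem v S g :
  (forall y, In y S -> 0 <= v y) -> In g S -> v g <= val v S.
Proof.
  induction S as [|a S IH]; intros Hnn Hg; [destruct Hg|].
  rewrite val_cons.
  assert (Hnn' : forall y, In y S -> 0 <= v y) by (intros y Hy; apply Hnn; right; exact Hy).
  pose proof (val_nonneg v S Hnn').
  destruct Hg as [<- | Hg].
  - lra.
  - assert (0 <= v a) by (apply Hnn; left; reflexivity).
    pose proof (IH Hnn' Hg); lra.
Qed.

Lemma in_remove_good y S g : In y (remove_good S g) -> In y S.
Proof. intro Hy; apply filter_In in Hy; tauto. Qed.

Lemma remove_good_notin S g : ~ In g S -> remove_good S g = S.
Proof.
  intro Hg; unfold remove_good; rewrite <- (filter_true S) at 2.
  apply filter_ext_in; intros a Ha.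
  destruct (Nat.eqb_spec a g) as [-> | _]; [contradiction | reflexivity].
Qed.

Lemma val_remove_good v S g :
  NoDup S -> In g S -> val v S = v g + val v (remove_good S g).
Proof.
  induction S as [|a S IH]; intros Hnd Hg; [destruct Hg|].
  apply NoDup_cons_iff in Hnd as [Ha Hnd].
  unfold remove_good; simpl filter.
  destruct (Nat.eqb_spec a g) as [-> | Hag]; simpl negb; cbv iota.
  - fold (remove_good S g); rewrite remove_good_notin by exact Ha.
    apply val_cons.
  - fold (remove_good S g).
    destruct Hg as [-> | Hg]; [contradiction|].
    rewrite !val_cons, (IH Hnd Hg); ring.
Qed.

Lemma val_remove_good_le v S g :
  NoDup S -> (forall y, In y S -> 0 <= v y) -> In g S ->
  0 <= val v (remove_good S g) <= val v S.
Proof.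
  intros Hnd Hnn Hg.
  rewrite (val_remove_good v S g Hnd Hg).
  assert (0 <= val v (remove_good S g))
    by (apply val_nonneg; intros y Hy; apply Hnn, (in_remove_good y S g Hy)).
  pose proof (Hnn g Hg); lra.
Qed.

Lemma val_remove_good_bounds v S g b :
  NoDup S -> (forall y, In y S -> 0 <= v y) -> (forall y, In y S -> b < v y) ->
  In g S -> remove_good S g <> [] ->
  b < val v (remove_good S g) < val v S - b.
Proof.
  intros Hnd Hnn Hgt Hg Hne.
  rewrite (val_remove_good v S g Hnd Hg).
  destruct (remove_good S g) as [|g2 R] eqn:ER; [contradiction|].
  assert (Hg2 : In g2 S) by (apply (in_remove_good g2 S g); rewrite ER; left; reflexivity).
  assert (v g2 <= val v (g2 :: R)).
  { apply val_ge_elem; [|left; reflexivity].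
    intros y Hy; apply Hnn, (in_remove_good y S g); rewrite ER; exact Hy. }
  pose proof (Hgt g Hg); pose proof (Hgt g2 Hg2); lra.
Qed.

Lemma fold_right_Rmax_mem x l :
  fold_right Rmax x l = x \/ In (fold_right Rmax x l) l.
Proof.
  induction l as [|a l IH]; simpl; [left; reflexivity|].
  apply Rmax_case; [right; left; reflexivity|].
  destruct IH as [-> | IH]; [left; reflexivity | right; right; exact IH].
Qed.

Lemma val_bar_attained v g0 S :
  exists g, In g (g0 :: S) /\ val_bar v (g0 :: S) = val v (remove_good (g0 :: S) g).
Proof.
  unfold val_bar.
  destruct (fold_right_Rmax_mem (val v (remove_good (g0 :: S) g0))
              (map (fun g' => val v (remove_good (g0 :: S) g')) S)) as [-> | Hin].
  - exists g0; split; [left|]; reflexivity.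
  - apply in_map_iff in Hin as [g [Hval Hg]].
    exists g; split; [right; exact Hg | symmetry; exact Hval].
Qed.

Lemma is_aEFX_of_removals a v T alloc :
  (forall i, 0 <= val v (bundle T alloc i)) ->
  (forall i j g, In g (bundle T alloc j) ->
     a * val v (remove_good (bundle T alloc j) g) <= val v (bundle T alloc i)) ->
  is_aEFX a v T alloc.
Proof.
  intros Hnn Hrem i j; apply Rle_ge.
  destruct (bundle T alloc j) as [|g0 S] eqn:Ej.
  - unfold val_bar; rewrite Rmult_0_r; apply Hnn.
  - destruct (val_bar_attained v g0 S) as [g [Hg ->]].
    rewrite <- Ej in Hg |- *; exact (Hrem i j g Hg).
Qed.

Lemma in_bundle T alloc i g :
  In g (bundle T alloc i) <-> (g < T)%nat /\ alloc g = i.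
Proof.
  unfold bundle; rewrite filter_In, in_seq.
  split; intros [Hg Hi].
  - split; [lia | apply Bool.eqb_prop, Hi].
  - split; [lia | rewrite Hi; apply Bool.eqb_reflx].
Qed.

Lemma NoDup_bundle T alloc i : NoDup (bundle T alloc i).
Proof. apply NoDup_filter, seq_NoDup. Qed.

Lemma val_bundle_partition v T alloc :
  val v (bundle T alloc true) + val v (bundle T alloc false) = val v (seq 0 T).
Proof.
  unfold bundle; induction (seq 0 T) as [|t l IH]; [unfold val; simpl; ring|].
  simpl filter; destruct (alloc t); simpl; rewrite !val_cons, <- IH; ring.
Qed.

Lemma sqrt5_sq : sqrt 5 * sqrt 5 = 5.
Proof. apply sqrt_sqrt; lra. Qed.

Lemma phi_sub1_pos : 0 < phi - 1.
Proof. unfold phi; pose proof (sqrt_pos 5); pose proof sqrt5_sq; nra. Qed.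

Lemma phi_sub1_lt1 : phi - 1 < 1.
Proof. unfold phi; pose proof (sqrt_pos 5); pose proof sqrt5_sq; nra. Qed.

Lemma phi_sub1_sq : (phi - 1) * (phi - 1) = 1 - (phi - 1).
Proof. unfold phi; pose proof sqrt5_sq; nra. Qed.

Lemma load1_le v n : load1 v n <= phi - 1.
Proof.
  induction n as [|n IH]; simpl.
  - pose proof phi_sub1_pos; lra.
  - destruct Rle_dec; assumption.
Qed.

Lemma load1_mono v m n :
  (forall t, (t < n)%nat -> 0 <= v t) -> (m <= n)%nat -> load1 v m <= load1 v n.
Proof.
  intros Hv Hmn; induction Hmn as [|n Hmn IH]; [lra|].
  assert (load1 v m <= load1 v n) by (apply IH; intros t Ht; apply Hv; lia).
  pose proof (Hv n (Nat.lt_succ_diag_r n)).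
  simpl; destruct Rle_dec; lra.
Qed.

Lemma val_bundle_alg_true v n : val v (bundle n (alg v) true) = load1 v n.
Proof.
  induction n as [|n IH]; [reflexivity|].
  unfold bundle; rewrite seq_S, filter_app, val_app.
  fold (bundle n (alg v) true); rewrite IH.
  unfold alg; simpl; destruct Rle_dec; simpl; unfold val; simpl; ring.
Qed.

Lemma alg_false_gt v t : alg v t = false -> phi - 1 - load1 v t < v t.
Proof. unfold alg; destruct Rle_dec; [discriminate | lra]. Qed.

Section FinalAllocation.

Variable T : nat.
Variable v : nat -> R.
Hypothesis v_nonneg : forall t, (t < T)%nat -> 0 <= v t.
Hypothesis v_normalized : val v (seq 0 T) = 1.

Let A := bundle T (alg v).

Lemma final_load_bounds : 0 <= load1 v T <= phi - 1.
Proof. split; [apply (load1_mono v 0 T v_nonneg); lia | apply load1_le]. Qed.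

Lemma val_bundle_alg_false : val v (A false) = 1 - load1 v T.
Proof.
  rewrite <- v_normalized, <- (val_bundle_partition v T (alg v)).
  fold A; rewrite <- val_bundle_alg_true; fold A; ring.
Qed.

Lemma bundle_alg_false_large g : In g (A false) -> phi - 1 - load1 v T < v g.
Proof.
  intro Hg; apply in_bundle in Hg as [HgT Hag].
  pose proof (alg_false_gt v g Hag).
  pose proof (load1_mono v g T v_nonneg (Nat.lt_le_incl _ _ HgT)).
  lra.
Qed.

Lemma bundle_elem_nonneg i y : In y (A i) -> 0 <= v y.
Proof. intro Hy; apply v_nonneg, (proj1 (proj1 (in_bundle T (alg v) i y) Hy)). Qed.

Lemma val_remove_bundle_le i g :
  In g (A i) -> 0 <= val v (remove_good (A i) g) <= val v (A i).
Proof.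
  apply val_remove_good_le; [apply NoDup_bundle | apply bundle_elem_nonneg].
Qed.

Lemma efx_within_bundle i g :
  In g (A i) -> (phi - 1) * val v (remove_good (A i) g) <= val v (A i).
Proof.
  intro Hg; pose proof (val_remove_bundle_le i g Hg).
  pose proof phi_sub1_pos; pose proof phi_sub1_lt1; nra.
Qed.

Lemma efx_agent2_towards_agent1 g :
  In g (A true) -> (phi - 1) * val v (remove_good (A true) g) <= val v (A false).
Proof.
  intro Hg; pose proof (val_remove_bundle_le true g Hg).
  rewrite val_bundle_alg_false, (val_bundle_alg_true v T : val v (A true) = _) in *.
  pose proof final_load_bounds; pose proof phi_sub1_pos; pose proof phi_sub1_sq.
  nra.
Qed.

Lemma efx_agent1_towards_agent2 g :
  In g (A false) -> (phi - 1) * val v (remove_good (A false) g) <= val v (A true).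
Proof.
  intro Hg; rewrite (val_bundle_alg_true v T : val v (A true) = _).
  pose proof final_load_bounds; pose proof phi_sub1_pos; pose proof phi_sub1_sq.
  destruct (list_eq_dec Nat.eq_dec (remove_good (A false) g) []) as [-> | Hne].
  - unfold val; simpl; lra.
  - pose proof (val_remove_good_bounds v (A false) g (phi - 1 - load1 v T)
                  (NoDup_bundle T (alg v) false) (bundle_elem_nonneg false) bundle_alg_false_large Hg Hne).
    rewrite val_bundle_alg_false in *; nra.
Qed.

End FinalAllocation.

Theorem theorem3p2 :
  forall (T : nat) (v : nat -> R),
    (forall t, (t < T)%nat -> 0 <= v t) ->
    val v (seq 0 T) = 1 ->
    is_aEFX (phi - 1) v T (alg v).
Proof.
  intros T v Hv Hsum.
  apply is_aEFX_of_removals.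
  - intro i; apply val_nonneg, (bundle_elem_nonneg T v Hv i).
  - intros [] [] g Hg.
    + apply (efx_within_bundle T v Hv true g Hg).
    + apply (efx_agent1_towards_agent2 T v Hv Hsum g Hg).
    + apply (efx_agent2_towards_agent1 T v Hv Hsum g Hg).
    + apply (efx_within_bundle T v Hv false g Hg).
Qed.
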